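(* Let $\mathcal A$ be a well-structured abstract domain with abstraction function $\alpha:\mathcal Q\to\mathcal A$. For any $R_1,R_2\subseteq\mathcal D(\mathcal H_V)$, if $\alpha_s(R_1)=\alpha_s(R_2)$ then $\alpha(R_1)=\alpha(R_2)$. Consequently $\alpha=\alpha\circ\gamma_s\circ\alpha_s$.
   Context: Fix a finite set $V$ of quantum variables, each a qubit with state space $\mathcal H_q\cong\mathbb C^2$; $\mathcal H_V=\bigotimes_{q\in V}\mathcal H_q$. $\mathcal D(\mathcal H_V)$ is the set of partial density operators on $\mathcal H_V$ (positive operators of trace at most $1$); $\lceil\rho\rceil$ denotes the support (image space) of $\rho$. The concrete domain is $\mathcal Q=2^{\mathcal D(\mathcal H_V)}$ ordered by inclusion. A pair of monotone maps $(\alpha,\gamma)$ between posets is a Galois connection if $c\le\gamma(a)\iff\alpha(c)\le a$, and a Galois embedding if moreover $\alpha\circ\gamma=\mathrm{id}$. A complete lattice $(\mathcal A,\le_{\mathcal A},\vee,\wedge,\bot,\top)$ with monotone $\alpha:\mathcal Q\to\mathcal A$, $\gamma:\mathcal A\to\mathcal Q$ is a well-structured abstract domain if (a) $(\alpha,\gamma)$ is a Galois embedding, and (b) for any family $\rho_i\in\mathcal D(\mathcal H_V)$ and reals $x_i>0$ with $\sum_i x_i\rho_i\in\mathcal D(\mathcal H_V)$, $\alpha(\sum_i x_i\rho_i)=\bigvee_i\alpha(\rho_i)$, where $\alpha(\rho)=\alpha(\{\rho\})$. The subspace domain $\mathcal S(\mathcal H_V)$ is the set of all subspaces of $\mathcal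 H_V$ ordered by inclusion, with join $P\vee Q=\mathrm{span}(P\cup Q)$ and meet $\cap$; its functions are $\gamma_s(P)=\{\rho\in\mathcal D(\mathcal H_V):\lceil\rho\rceil\subseteq P\}$ and $\alpha_s(R)=\bigvee\{\lceil\rho\rceil:\rho\in R\}$. *)

From HB Require Import structures.
From mathcomp Require Import all_boot all_order all_algebra.
From mathcomp Require Import boolp classical_sets.
Set Implicit Arguments. Unset Strict Implicit. Unset Printing Implicit Defensive.
Import Order.TTheory GRing.Theory Num.Theory.
Local Open Scope ring_scope.
Local Open Scope classical_set_scope.

(* Scalars: an arbitrary numeric algebraically closed field C (e.g. the
   complex numbers).  A system of n qubits has state space H_V = C^(2^n).
   Vectors are row vectors, an operator A acts by v |-> v *m A. *)
Notation dimV n := (2 ^ n)%N.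

Definition psd (C : numClosedFieldType) (N : nat) (A : 'M[C]_N) : Prop :=
  forall v : 'rV[C]_N, 0 <= (v *m A *m (map_mx Num.conj v)^T) 0 0.

Definition is_pdo (C : numClosedFieldType) (N : nat) (A : 'M[C]_N) : Prop :=
  psd A /\ \tr A <= 1.

Definition dens (C : numClosedFieldType) (n : nat) : Type :=
  {A : 'M[C]_(dimV n) | is_pdo A}.

(* support (image space) of an operator: the span of its rows, i.e. the
   image of v |-> v *m A *)
Definition supp (C : numClosedFieldType) (N : nat) (A : 'M[C]_N)
  : {vspace 'rV[C]_N} := (\sum_(i < N) <[row i A]>)%VS.

(* subspace domain S(H_V) = {vspace 'rV_(2^n)}, ordered by inclusion *)
(* alpha_s R = join (span) of the supports of the elements of R *)
Definition alpha_s (C : numClosedFieldType) (n : nat) (R : set (dens C n))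
  : {vspace 'rV[C]_(dimV n)} :=
  xget 0%VS [set P | (forall r, R r -> (supp (sval r) <= P)%VS) /\
                     (forall Q, (forall r, R r -> (supp (sval r) <= Q)%VS) ->
                                (P <= Q)%VS)].

Definition gamma_s (C : numClosedFieldType) (n : nat)
  (P : {vspace 'rV[C]_(dimV n)}) : set (dens C n) :=
  [set r | (supp (sval r) <= P)%VS].

Definition complete_lattice (A : Type) (le : A -> A -> Prop)
  (sup : set A -> A) : Prop :=
  [/\ (forall a, le a a),
      (forall a b, le a b -> le b a -> a = b),
      (forall a b c, le a b -> le b c -> le a c),
      (forall (S : set A) a, S a -> le a (sup S)) &
      (forall (S : set A) b, (forall a, S a -> le a b) -> le (sup S) b)].

(* well-structured abstract domain; the concrete domain Q = set (dens C n)
   is ordered by inclusion *)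
Definition well_structured (C : numClosedFieldType) (n : nat) (A : Type)
  (le : A -> A -> Prop) (sup : set A -> A)
  (alpha : set (dens C n) -> A) (gamma : A -> set (dens C n)) : Prop :=
  complete_lattice le sup /\
    [/\
      (forall c1 c2, c1 `<=` c2 -> le (alpha c1) (alpha c2)),
      (forall a1 a2, le a1 a2 -> gamma a1 `<=` gamma a2),
      (forall c a, c `<=` gamma a <-> le (alpha c) a) &
      (forall a, alpha (gamma a) = a)] /\
      ((* condition (b), for finite families rho_0..rho_(k-1), x_i > 0 *)
      (forall (k : nat) (rho : 'I_k -> dens C n) (x : 'I_k -> C)
              (sigma : dens C n),
          (forall i, 0 < x i) ->
          sval sigma = \sum_(i < k) x i *: sval (rho i) ->
          alpha [set sigma] = sup [set alpha [set rho i] | i in setT])).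

(* By the Galois connection it suffices to show [alpha {rho} <= alpha R] whenever
   the support of [rho] lies in [alpha_s R].  Finitely many members of [R] already
   span [alpha_s R]; by condition (b) their uniform mixture [sigma] satisfies
   [alpha {sigma} <= alpha R].  The support of [rho] lies in that of [sigma], so
   [rho <= c sigma] for some [c], i.e. [sigma = e rho + tau] with [e > 0] and [tau]
   a partial density operator, and condition (b) again gives
   [alpha {rho} <= alpha {sigma}]. *)

From HB Require Import structures.
From mathcomp Require Import all_boot all_order all_algebra.
From mathcomp Require Import boolp classical_sets.
From mathcomp Require Import ring.
Set Implicit Arguments. Unset Strict Implicit. Unset Printing Implicit Defensive.
Import Order.TTheory GRing.Theory Num.Theory.
Local Open Scope ring_scope.

Section ConjTranspose.
Variable C : numClosedFieldType.

Definition ctmx m k (M : 'M[C]_(m, k)) : 'M[C]_(k, m) := (map_mx Num.conj M)^T.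

Lemma ctmx_mul m k p (A : 'M[C]_(m, k)) (B : 'M[C]_(k, p)) :
  ctmx (A *m B) = ctmx B *m ctmx A.
Proof. by rewrite /ctmx map_mxM trmx_mul. Qed.

Lemma ctmxK m k (A : 'M[C]_(m, k)) : ctmx (ctmx A) = A.
Proof. by apply/matrixP=> i j; rewrite !mxE conjCK. Qed.

Lemma ctmxD m k (A B : 'M[C]_(m, k)) : ctmx (A + B) = ctmx A + ctmx B.
Proof. by apply/matrixP=> i j; rewrite !mxE rmorphD. Qed.

Lemma ctmxZ m k a (A : 'M[C]_(m, k)) : ctmx (a *: A) = a^* *: ctmx A.
Proof. by apply/matrixP=> i j; rewrite !mxE rmorphM. Qed.

Lemma ctmx_delta k (j : 'I_k) : ctmx (delta_mx 0 j) = delta_mx j (0 : 'I_1).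
Proof. by apply/matrixP=> a b; rewrite !mxE (rmorph_nat Num.conj) andbC. Qed.

Lemma ctmxE m k (A : 'M[C]_(m, k)) : ctmx A = map_mx Num.conj A^T.
Proof. by rewrite /ctmx map_trmx. Qed.

End ConjTranspose.

Section PsdForm.
Variables (C : numClosedFieldType) (N : nat).
Implicit Types (A B M S : 'M[C]_N) (u v w z : 'rV[C]_N).

(* [psd A] unfolds to [forall v, 0 <= hform A v v]. *)
Definition hform A u w : C := (u *m A *m ctmx w) 0 0.

Lemma hformDl A u v w : hform A (u + v) w = hform A u w + hform A v w.
Proof. by rewrite /hform !mulmxDl mxE. Qed.

Lemma hformZl A a u w : hform A (a *: u) w = a * hform A u w.
Proof. by rewrite /hform -!scalemxAl mxE. Qed.

Lemma hformDr A u v w : hform A u (v + w) = hform A u v + hform A u w.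
Proof. by rewrite /hform ctmxD mulmxDr mxE. Qed.

Lemma hformZr A a u w : hform A u (a *: w) = a^* * hform A u w.
Proof. by rewrite /hform ctmxZ -scalemxAr mxE. Qed.

Lemma hformD A B u w : hform (A + B) u w = hform A u w + hform B u w.
Proof. by rewrite /hform mulmxDr mulmxDl mxE. Qed.

Lemma hformZ A a u w : hform (a *: A) u w = a * hform A u w.
Proof. by rewrite /hform -scalemxAr -scalemxAl mxE. Qed.

Lemma hformN A u w : hform (- A) u w = - hform A u w.
Proof. by rewrite -scaleN1r hformZ mulN1r. Qed.

Lemma hform_sum k (F : 'I_k -> 'M[C]_N) u w :
  hform (\sum_(i < k) F i) u w = \sum_(i < k) hform (F i) u w.
Proof.
elim/big_rec2: _ => [|i y1 y2 _ <-]; last by rewrite hformD.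
by rewrite /hform mulmx0 mul0mx mxE.
Qed.

Lemma hform_delta A i j : hform A (delta_mx 0 i) (delta_mx 0 j) = A i j.
Proof. by rewrite /hform ctmx_delta -rowE -colE !mxE. Qed.

Lemma psdZ A a : 0 <= a -> psd A -> psd (a *: A).
Proof. by move=> a0 pA v; rewrite -/(hform _ _ _) hformZ mulr_ge0 ?(pA v). Qed.

Lemma psd_sum k (F : 'I_k -> 'M[C]_N) :
  (forall i, psd (F i)) -> psd (\sum_(i < k) F i).
Proof.
by move=> pF v; rewrite -/(hform _ _ _) hform_sum; apply: sumr_ge0 => i _; apply: pF.
Qed.

Lemma psd_mxtrace_ge0 A : psd A -> 0 <= \tr A.
Proof. by move=> pA; apply: sumr_ge0 => i _; rewrite -hform_delta; apply: pA. Qed.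

Section Psd.
Variable A : 'M[C]_N.
Hypothesis pA : psd A.

Lemma psd_hform_conj v : (hform A v v)^* = hform A v v.
Proof. exact/conj_Creal/ger0_real/pA. Qed.

Lemma psd_hform_sym_conj u w :
  (hform A u w + hform A w u)^* = hform A u w + hform A w u.
Proof.
have := psd_hform_conj (u + w).
rewrite !hformDl !hformDr !rmorphD /= !psd_hform_conj => E.
apply: (@addrI _ (hform A u u + hform A w w)).
by transitivity (hform A u u + (hform A u w)^* + ((hform A w u)^* + hform A w w));
  [ring | rewrite E; ring].
Qed.

(* Polarization: apply [psd_hform_sym_conj] to [(u, w)] and to [(u, 'i w)]. *)
Lemma psd_hformC u w : hform A w u = (hform A u w)^*.
Proof.
set a := hform A u w; set b := hform A w u.
have real_sum := psd_hform_sym_conj u w; rewrite -/a -/b rmorphD /= in real_sum.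
have := psd_hform_sym_conj u ('i *: w).
rewrite hformZl hformZr conjCi -/a -/b !rmorphD /= !rmorphM /= rmorphN /= conjCi.
move=> imag_diff.
have two_i : 2 * 'i != 0 :> C by rewrite mulf_neq0 ?pnatr_eq0 ?neq0Ci.
apply: (mulfI two_i); transitivity ('i * (a + b) + (- 'i * a + 'i * b)).
  by ring.
by rewrite -real_sum -imag_diff; ring.
Qed.

Lemma psd_hform_expand u w s : 0 <=
  hform A u u + s^* * hform A u w + s * (hform A u w)^* + s * s^* * hform A w w.
Proof.
have := pA (u + s *: w); rewrite -/(hform _ _ _).
rewrite hformDl !hformDr !hformZl !hformZr (psd_hformC u w).
by congr (0 <= _); ring.
Qed.

Lemma psd_CauchySchwarz u w : `|hform A u w| ^+ 2 <= hform A u u * hform A w w.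
Proof.
rewrite normCK; set a := hform A u u; set b := hform A w w; set c := hform A u w.
have a_conj : a^* = a by apply: psd_hform_conj.
have b_conj : b^* = b by apply: psd_hform_conj.
have [b0|b_neq0] := eqVneq b 0.
  rewrite b0 mulr0; have [->|c_neq0] := eqVneq c 0; first by rewrite mul0r.
  have cc_neq0 : c^* != 0 by rewrite conjC_eq0.
  (* a large multiple of [w] makes the form negative along [u + s w] *)
  have := psd_hform_expand u w (- (a + 1) / (2 * c^*)).
  rewrite -/a -/b -/c b0 mulr0 addr0 rmorphM /= fmorphV /= rmorphM /= !rmorphN /=.
  rewrite rmorphD /= a_conj conjCK (rmorph_nat Num.conj 2) rmorph1.
  have -> : a + - (a + 1) / (2 * c) * c + - (a + 1) / (2 * c^*) * c^* = -1.
    by field; rewrite cc_neq0 c_neq0.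
  by rewrite oppr_ge0 ler10.
have b_gt0 : 0 < b by rewrite lt_def b_neq0 pA.
have := psd_hform_expand u w (- c / b).
rewrite -/a -/b -/c rmorphM /= fmorphV /= rmorphN /= b_conj.
have -> : a + - c^* / b * c + - c / b * c^* + - c / b * (- c^* / b) * b =
          a - c * c^* / b by field.
by rewrite subr_ge0 ler_pdivrMr.
Qed.

Lemma psd_ctmx : ctmx A = A.
Proof.
apply/matrixP=> i j; rewrite [LHS]mxE mxE -!hform_delta.
by rewrite (psd_hformC _ (delta_mx 0 j)) conjCK.
Qed.

Lemma psd_hform_eq0 z : hform A z z = 0 -> A *m ctmx z = 0.
Proof.
move=> z0; apply/matrixP=> k j; rewrite (ord1 j) [RHS]mxE.
have -> : (A *m ctmx z) k 0 = hform A (delta_mx 0 k) z.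
  by rewrite /hform -mulmxA -rowE [RHS]mxE.
apply/eqP; rewrite -normr_eq0 -(sqrf_eq0 _) eq_le exprn_ge0 ?normr_ge0 // andbT.
by have := psd_CauchySchwarz (delta_mx 0 k) z; rewrite z0 mulr0.
Qed.

End Psd.

Lemma psd_submx A M : psd A ->
  (forall z, hform M z z = 0 -> hform A z z = 0) -> (A <= M)%MS.
Proof.
move=> pA kerMA; rewrite submxE; apply/eqP/matrixP => i j; rewrite [RHS]mxE.
set K := cokermx M; have MK0 : M *m K = 0 := mulmx_coker M.
have MKj0 : M *m col j K = 0 by rewrite colE mulmxA MK0 mul0mx.
have AKj0 : A *m col j K = 0.
  rewrite -[col j K]ctmxK; apply: psd_hform_eq0 => //; apply: kerMA.
  by rewrite /hform ctmxK -mulmxA MKj0 mulmx0 mxE.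
by move: AKj0; rewrite colE mulmxA -colE => /matrixP/(_ i 0); rewrite !mxE.
Qed.

Lemma psd_row_dominated S u : psd S -> (u <= S)%MS ->
  exists2 c, 0 <= c & forall v, `|(v *m ctmx u) 0 0| ^+ 2 <= c * hform S v v.
Proof.
move=> pS /submxP[Y ->]; exists (hform S Y Y) => [|v]; first exact: pS.
rewrite ctmx_mul psd_ctmx // mulmxA -/(hform S v Y) mulrC.
exact: psd_CauchySchwarz.
Qed.

Lemma psd_spectral_hform A : psd A ->
  exists (d : 'I_N -> C) (u : 'I_N -> 'rV[C]_N),
  [/\ forall k, d k \is Num.real, forall k, d k != 0 -> (u k <= A)%MS &
      forall v, hform A v v = \sum_k d k * `|(v *m ctmx (u k)) 0 0| ^+ 2].
Proof.
move=> pA; have herm_A : A \is hermsymmx.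
  by apply/is_hermitianmxP; rewrite expr0 scale1r -ctmxE psd_ctmx.
set P := spectralmx A; set d := spectral_diag A.
have A_diag : A = ctmx P *m diag_mx d *m P.
  have /orthomx_spectralP {1}-> := hermitian_normalmx herm_A.
  by rewrite invmx_unitary ?spectral_unitarymx // ctmxE.
have PP1 : P *m ctmx P = 1%:M by rewrite ctmxE; apply/unitarymxP/spectral_unitarymx.
exists (d 0), (fun k => row k P); split=> [k|k dk_neq0|v].
- by have /mxOverP := hermitian_spectral_diag_real herm_A; apply.
- have PkA : row k P *m A = d 0 k *: row k P.
    by rewrite A_diag !mulmxA -row_mul PP1 row1 -rowE row_diag_mx -scalemxAl -rowE.
  by rewrite -[row k P](scalerK dk_neq0) -PkA scalemx_sub ?submxMl.
rewrite /hform A_diag !mulmxA -mulmxA.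
have -> : P *m ctmx v = ctmx (v *m ctmx P) by rewrite ctmx_mul ctmxK.
rewrite mxE; apply: eq_bigr => k _; rewrite mul_mx_diag !mxE normCK.
set y := \sum_j _ * ctmx P j k.
have -> : \sum_j v 0 j * ctmx (row k P) j 0 = y by apply: eq_bigr => j _; rewrite !mxE.
by rewrite mulrAC mulrC.
Qed.

Lemma psd_dominated A S : psd A -> psd S -> (A <= S)%MS ->
  exists2 c, 0 <= c & forall v, hform A v v <= c * hform S v v.
Proof.
move=> pA pS sAS; have [d [u [d_real u_sub A_hform]]] := psd_spectral_hform pA.
have termwise k : exists c, 0 <= c /\
    forall v, d k * `|(v *m ctmx (u k)) 0 0| ^+ 2 <= c * hform S v v.
  have [->|dk_neq0] := eqVneq (d k) 0.
    by exists 0; split=> // v; rewrite !mul0r.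
  have [c c_ge0 bound] := psd_row_dominated pS (submx_trans (u_sub k dk_neq0) sAS).
  exists (`|d k| * c); split=> [|v]; first by rewrite mulr_ge0.
  rewrite -mulrA; apply: le_trans (ler_wpM2l (normr_ge0 _) (bound v)).
  by rewrite ler_wpM2r ?exprn_ge0 ?real_ler_norm.
have [c c_spec] := fin_all_exists termwise.
exists (\sum_k c k) => [|v]; first by apply: sumr_ge0 => k _; case: (c_spec k).
by rewrite A_hform mulr_suml; apply: ler_sum => k _; case: (c_spec k) => _; apply.
Qed.

Lemma is_pdo_sum k (x : 'I_k -> C) (F : 'I_k -> 'M[C]_N) :
  (forall i, 0 <= x i) -> \sum_i x i <= 1 -> (forall i, is_pdo (F i)) ->
  is_pdo (\sum_i x i *: F i).
Proof.
move=> x_ge0 x_sum pdoF; split; first by apply: psd_sum => i; apply/psdZ/(pdoF i).1.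
rewrite raddf_sum /=; apply: le_trans x_sum; apply: ler_sum => i _.
by rewrite mxtraceZ -[leRHS]mulr1 ler_wpM2l // (pdoF i).2.
Qed.

Lemma psd_sum_submx k (x : 'I_k -> C) (F : 'I_k -> 'M[C]_N) :
  (forall i, 0 < x i) -> (forall i, psd (F i)) ->
  forall j, (F j <= (\sum_i x i *: F i)%R)%MS.
Proof.
move=> x_gt0 psdF j; apply: psd_submx (psdF j) _ => z.
have terms_ge0 i : true -> 0 <= hform (x i *: F i) z z.
  by move=> _; rewrite hformZ; apply: mulr_ge0; [exact/ltW/x_gt0 | exact: psdF].
rewrite hform_sum => /(psumr_eq0P terms_ge0)/(_ j isT)/eqP.
by rewrite hformZ mulf_eq0 gt_eqF //= => /eqP.
Qed.

(* [psd_dominated] gives [A <= c S] as forms; then [e = 1 / (c + 1)] works. *)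
Lemma pdo_subr_scale S A : is_pdo S -> psd A -> (A <= S)%MS ->
  exists2 e, 0 < e & is_pdo (S - e *: A).
Proof.
move=> [pS trS] pA sAS; have [c c_ge0 A_le] := psd_dominated pA pS sAS.
have c1_gt0 : 0 < c + 1 by rewrite ltr_pwDr.
exists (c + 1)^-1; first by rewrite invr_gt0.
split=> [v|].
  rewrite -/(hform _ _ _) hformD hformN hformZ subr_ge0 ler_pdivrMl //.
  by apply: le_trans (A_le v) _; rewrite ler_wpM2r ?lerDl // pS.
rewrite mxtraceD -scaleNr mxtraceZ; apply: le_trans trS.
by rewrite gerDl mulNr oppr_le0 mulr_ge0 ?invr_ge0 ?(ltW c1_gt0) ?psd_mxtrace_ge0.
Qed.

End PsdForm.

Section Support.
Variables (C : numClosedFieldType) (N : nat).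
Implicit Types A B : 'M[C]_N.

Lemma row_in_supp A i : row i A \in supp A.
Proof. by rewrite memvE (sumv_sup i) // -memvE memv_line. Qed.

Lemma supp_subv A B : (supp A <= supp B)%VS = (A <= B)%MS.
Proof.
apply/idP/idP => [/subvP sAB | /submxP[D ->]].
  apply/row_subP => i; have /memv_sumP[vs vs_line ->] := sAB _ (row_in_supp A i).
  apply: summx_sub => j _; have /vlineP[c ->] := vs_line j isT.
  exact/scalemx_sub/row_sub.
apply/subv_sumP => i _; rewrite -memvE row_mul mulmx_sum_row.
by apply: rpred_sum => k _; apply/rpredZ/row_in_supp.
Qed.

End Support.

(* A finite subfamily with a sum of maximal dimension already contains every member. *)
Lemma finite_subfamily_sum (K : fieldType) (vT : vectType K) (T : Type)
    (R : set T) (f : T -> {vspace vT}) :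
  exists k (g : 'I_k -> T),
    (forall i, R (g i)) /\ (forall x, R x -> (f x <= \sum_(i < k) f (g i))%VS).
Proof.
pose sumf k (g : 'I_k -> T) := (\sum_(i < k) f (g i))%VS.
pose P m := `[< exists k (g : 'I_k -> T), (forall i, R (g i)) /\ \dim (sumf k g) = m >].
have P0 : exists m, P m.
  exists 0%N; apply/asboolP.
  exists 0%N, (fun i : 'I_0 => False_rect T (notF (ltn_ord i))).
  by split=> [[m]|]; rewrite ?ltn0 // /sumf big_ord0 dimv0.
have P_bounded m : P m -> (m <= \dim (fullv : {vspace vT}))%N.
  by move=> /asboolP[k [g [_ <-]]]; apply/dimvS/subvf.
case: (ex_maxnP P0 P_bounded) => m /asboolP[k [g [Rg dim_g]]] max_m.
exists k, g; split=> // x Rx; apply/negPn/negP => x_out.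
pose g' (i : 'I_k.+1) := if unlift ord_max i is Some j then g j else x.
have sum_g' : sumf k.+1 g' = (sumf k g + f x)%VS.
  rewrite /sumf big_ord_recr /g' unlift_none; congr (_ + _)%VS.
  apply: eq_bigr => i _.
  suff -> : widen_ord (leqnSn k) i = lift ord_max i by rewrite liftK.
  by apply: val_inj; rewrite /= /bump leqNgt ltn_ord.
have : P (\dim (sumf k.+1 g')).
  by apply/asboolP; exists k.+1, g'; split=> // i; rewrite /g'; case: unlift.
move/max_m; rewrite sum_g' -dim_g leqNgt (ltn_leqif (dimv_leqif_eq (addvSl _ _))).
apply/negP/negPn; apply: contra x_out => /eqP sum_eq.
by rewrite -/(sumf k g) sum_eq addvSr.
Qed.

Section SubspaceAbstraction.
Variables (C : numClosedFieldType) (n : nat).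
Local Notation D := (dens C n).
Local Open Scope classical_set_scope.

Lemma alpha_s_spec (R : set D) :
  (forall r, R r -> (supp (sval r) <= alpha_s R)%VS) /\
  (forall Q, (forall r, R r -> (supp (sval r) <= Q)%VS) -> (alpha_s R <= Q)%VS).
Proof.
rewrite /alpha_s; set S := (X in xget _ X).
suff /(xgetPex 0%VS) S_xget : exists P, S P by exact: S_xget.
have [k [g [Rg spans]]] := finite_subfamily_sum R (fun r : D => supp (sval r)).
exists (\sum_(i < k) supp (sval (g i)))%VS; split=> // Q R_Q.
by apply/subv_sumP => i _; apply: R_Q.
Qed.

Lemma alpha_s_gamma_s (R : set D) : alpha_s (gamma_s (alpha_s R)) = alpha_s R.
Proof.
have [ub_R least_R] := alpha_s_spec R.
have [ub_gR least_gR] := alpha_s_spec (gamma_s (alpha_s R)).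
apply/eqP; rewrite eqEsubv; apply/andP; split; first exact: least_gR.
by apply: least_R => r Rr; apply/ub_gR/ub_R.
Qed.

Variables (A : Type) (le : A -> A -> Prop) (sup : set A -> A).
Variables (alpha : set D -> A) (gamma : A -> set D).
Hypothesis ws : well_structured le sup alpha gamma.

Lemma alpha_summand_le (rho tau sigma : D) e : 0 < e ->
  sval sigma = e *: sval rho + sval tau -> le (alpha [set rho]) (alpha [set sigma]).
Proof.
have [[_ _ _ sup_ub _] [_ mix]] := ws; move=> e_gt0 sigmaE.
pose rh (i : 'I_2) := if i == ord0 then rho else tau.
pose x (i : 'I_2) : C := if i == ord0 then e else 1.
rewrite (mix 2 rh x sigma); last by rewrite !big_ord_recr big_ord0 /= add0r scale1r.
  by apply: sup_ub; exists ord0.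
by move=> i; rewrite /x; case: ifP => _; [exact: e_gt0 | exact: ltr01].
Qed.

Lemma alpha_mixture_le (R : set D) k (g : 'I_k -> D) (x : 'I_k -> C) (sigma : D) :
  (forall i, R (g i)) -> (forall i, 0 < x i) ->
  sval sigma = \sum_i x i *: sval (g i) -> le (alpha [set sigma]) (alpha R).
Proof.
have [[_ _ _ _ sup_least] [[mono _ _ _] mix]] := ws; move=> Rg x_gt0 sigmaE.
rewrite (mix k g x sigma x_gt0 sigmaE); apply: sup_least => _ [i _ <-].
by apply: mono => r ->.
Qed.

Lemma alpha_le_of_supp (R : set D) (rho : D) :
  (supp (sval rho) <= alpha_s R)%VS -> le (alpha [set rho]) (alpha R).
Proof.
have [[_ _ le_tr _ _] _] := ws; move=> rho_supp.
have [k [g [Rg spans]]] := finite_subfamily_sum R (fun r : D => supp (sval r)).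
pose x (i : 'I_k) : C := (k%:R + 1)^-1.
have x_gt0 i : 0 < x i by rewrite invr_gt0 ltr_pwDr.
have x_sum : \sum_i x i <= 1.
  rewrite /x sumr_const card_ord -[_ *+ k]mulr_natl.
  by rewrite ler_pdivrMr ?mul1r ?lerDl ?ltr_pwDr.
have sigma_pdo := is_pdo_sum (fun i => ltW (x_gt0 i)) x_sum (fun i => svalP (g i)).
pose sigma : D := exist _ _ sigma_pdo.
have rho_sub : (sval rho <= sval sigma)%MS.
  rewrite -supp_subv; apply: subv_trans rho_supp _; apply: (alpha_s_spec R).2 => r Rr.
  apply: subv_trans (spans r Rr) _; apply/subv_sumP => i _; rewrite supp_subv.
  by apply: psd_sum_submx => // j; case: (svalP (g j)).
have [e e_gt0 tau_pdo] := pdo_subr_scale sigma_pdo (svalP rho).1 rho_sub.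
pose tau : D := exist _ _ tau_pdo.
apply: le_tr (alpha_mixture_le Rg x_gt0 (erefl (sval sigma))).
by apply: (@alpha_summand_le rho tau sigma e) => //=; rewrite addrC subrK.
Qed.

Lemma alpha_le_of_alpha_s (R1 R2 : set D) :
  (alpha_s R1 <= alpha_s R2)%VS -> le (alpha R1) (alpha R2).
Proof.
have [_ [[_ _ galois _] _]] := ws; move=> le12.
apply/galois => r R1r; apply: (proj2 (galois [set r] _)) (erefl r).
by apply: alpha_le_of_supp; apply: subv_trans le12; apply: (alpha_s_spec R1).1.
Qed.

End SubspaceAbstraction.

Theorem mainTheorem2 (C : numClosedFieldType) (n : nat) (A : Type)
  (le : A -> A -> Prop) (sup : set A -> A)
  (alpha : set (dens C n) -> A) (gamma : A -> set (dens C n)) :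
  well_structured le sup alpha gamma ->
  (forall R1 R2 : set (dens C n), alpha_s R1 = alpha_s R2 -> alpha R1 = alpha R2)
  /\ (forall R : set (dens C n), alpha R = alpha (gamma_s (alpha_s R))).
Proof.
move=> ws; have [[_ le_anti _ _ _] _] := ws.
have alpha_eq R1 R2 : alpha_s R1 = alpha_s R2 -> alpha R1 = alpha R2.
  by move=> E; apply: le_anti; apply: (alpha_le_of_alpha_s ws); rewrite E.
by split=> // R; apply: alpha_eq; rewrite alpha_s_gamma_s.
Qed.
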